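(* Let $\gamma_X=(X,d_X(\cdot))$ and $\gamma_Y=(Y,d_Y(\cdot))$ be any two dynamic metric spaces. For any $k\in\mathbf{Z}_+$, \[d_{\mathrm{I}}(\mathrm{rk}_k(\gamma_X),\mathrm{rk}_k(\gamma_Y))\le 2\cdot d_{\mathtt{dyn}}(\gamma_X,\gamma_Y).\]
   Context: A dynamic metric space (DMS) is a pair $\gamma_X=(X,d_X(\cdot))$ where $X$ is a nonempty finite set and $d_X(\cdot):\mathbf{R}\times X\times X\to\mathbf{R}_+$ satisfies: each $d_X(t)$ is a pseudometric, some $d_X(t_0)$ is a metric, and $t\mapsto d_X(t)(x,x')$ is continuous for all $x,x'$. For a closed interval $I$, $(\bigvee_I d_X)(x,x'):=\min_{s\in I}d_X(s)(x,x')$; $[t]^\varepsilon=[t-\varepsilon,t+\varepsilon]$. A tripod between $X$ and $Y$ is a set $Z$ with surjections $\varphi_X:Z\to X$, $\varphi_Y:Z\to Y$; it is an $\varepsilon$-tripod between $\gamma_X,\gamma_Y$ if for all $t\in\mathbf{R}$, $z,z'\in Z$: $(\bigvee_{[t]^\varepsilon}d_X)(\varphi_X(z),\varphi_X(z'))\le d_Y(t)(\varphi_Y(z),\varphi_Y(z'))+2\varepsilon$ and $(\bigvee_{[t]^\varepsilon}d_Y)(\varphi_Y(z),\varphi_Y(z'))\le d_X(t)(\varphi_X(z),\varphi_X(z'))+2\varepsilon$. $d_{\mathtt{dyn}}(\gamma_X,\gamma_Y)$ is the minimum over tripods of the infimum of $\varepsilon$ for which the tripod is an $\varepsilon$-tripod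 ($\infty$ if none). For symmetric $d$ vanishing on the diagonal, $\mathcal{R}_\delta(X,d)$ is the simplicial complex on $X$ with simplices the nonempty $\sigma$ with $d(x,x')\le\delta$ for all $x,x'\in\sigma$; $\mathrm{H}_k$ is simplicial homology over a fixed field. $\mathbf{R}^6_\times$ is $\mathbf{R}^6$ with $\mathbf{a}\le\mathbf{b}$ iff $a_1\le b_1$, $a_2\ge b_2$, $a_3\ge b_3$, $a_4\ge b_4$, $a_5\le b_5$, $a_6\le b_6$. $\mathbf{a}$ is admissible if $a_1\le a_2$, $a_4\le a_5$, $a_3,a_6\ge0$, $[a_1,a_2]\subseteq[a_4,a_5]$, $a_3\le a_6$; trivially non-admissible if no admissible $\mathbf{b}<\mathbf{a}$ in $\mathbf{R}^6_\times$ exists. $\mathrm{rk}_k(\gamma_X):\mathbf{R}^6\to\mathbf{Z}_+\cup\{\infty\}$ is the rank of $\mathrm{H}_k(\mathcal{R}_{a_3}(X,\bigvee_{[a_1,a_2]}d_X)\hookrightarrow\mathcal{R}_{a_6}(X,\bigvee_{[a_4,a_5]}d_X))$ for admissible $\mathbf{a}$, $\infty$ for trivially non-admissible $\mathbf{a}$, and $0$ otherwise; it is order-reversing on $\mathbf{R}^6_\times$. For order-reversing $F,G:\mathbf{R}^6_\times\to\mathbf{Z}_+\cup\{\infty\}$ and $\varepsilon\ge0$, let $\mathbf{a}+\vec\varepsilon:=(a_1+\varepsilon,a_2-\varepsilon,a_3-\varepsilon,a_4-\varepsilon,a_5+\varepsilon,a_6+\varepsilon)$ (the shift upward by $\varepsilon$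 in every coordinate of $\mathbf{R}^6_\times$). Then $d_{\mathrm{I}}(F,G):=\inf\{\varepsilon\ge0:\forall\mathbf{a},\ F(\mathbf{a})\ge G(\mathbf{a}+\vec\varepsilon)\text{ and }G(\mathbf{a})\ge F(\mathbf{a}+\vec\varepsilon)\}$. *)

From HB Require Import structures.
From mathcomp Require Import all_boot all_order all_algebra.
From mathcomp Require Import all_classical all_reals all_analysis.
Set Implicit Arguments. Unset Strict Implicit. Unset Printing Implicit Defensive.
Import Order.TTheory GRing.Theory Num.Theory.
Import numFieldNormedType.Exports.
Local Open Scope classical_set_scope.
Local Open Scope ring_scope.

Definition is_pseudometric (R : realType) (X : finType) (d : X -> X -> R) : Prop :=
  [/\ forall x y, 0 <= d x y,
      forall x, d x x = 0,
      forall x y, d x y = d y x &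
      forall x y z, d x z <= d x y + d y z].

Definition is_metric (R : realType) (X : finType) (d : X -> X -> R) : Prop :=
  is_pseudometric d /\ forall x y, d x y = 0 -> x = y.

Definition is_DMS (R : realType) (X : finType) (d : R -> X -> X -> R) : Prop :=
  [/\ (0 < #|X|)%N,
      forall t, is_pseudometric (d t),
      exists t0, is_metric (d t0) &
      forall x x', continuous (fun t => d t x x')].

(* (\/_{[a,b]} d)(x,x') = min_{s in [a,b]} d(s)(x,x')  (the min exists by
   continuity, so it is the infimum) *)
Definition bigvee (R : realType) (X : finType) (d : R -> X -> X -> R) (a b : R)
  (x x' : X) : R :=
  inf [set d s x x' | s in [set s : R | a <= s <= b]].

Definition is_eps_tripod (R : realType) (X Y : finType)
  (dX : R -> X -> X -> R) (dY : R -> Y -> Y -> R)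
  (Z : Type) (phX : Z -> X) (phY : Z -> Y) (e : R) : Prop :=
  forall (t : R) (z z' : Z),
    bigvee dX (t - e) (t + e) (phX z) (phX z') <= dY t (phY z) (phY z') + 2 * e
 /\ bigvee dY (t - e) (t + e) (phY z) (phY z') <= dX t (phX z) (phX z') + 2 * e.

Definition d_dyn (R : realType) (X Y : finType)
  (dX : R -> X -> X -> R) (dY : R -> Y -> Y -> R) : \bar R :=
  ereal_inf [set (e%:E)%E | e in [set e : R | 0 <= e /\
     exists (Z : Type) (phX : Z -> X) (phY : Z -> Y),
       [/\ (forall x, exists z, phX z = x), (forall y, exists z, phY z = y) & is_eps_tripod dX dY phX phY e]]].

(* simplicial complexes on X are predicates on {set X} (the simplices) *)
Definition rips (R : realType) (X : finType) (d : X -> X -> R) (delta : R)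
  : pred {set X} :=
  fun s => (s != finset.set0) && [forall x in s, forall y in s, d x y <= delta].

(* chains: F-valued functions on subsets of X; a k-simplex s (#|s| = k+1)
   is oriented by the linear order of X given by enum_rank *)
Definition chain (F : fieldType) (X : finType) := {ffun {set X} -> F^o}.

Definition pos_in (X : finType) (s : {set X}) (x : X) : nat :=
  #|[set y in s | (enum_rank y < enum_rank x)%N]|.

(* simplicial boundary: d[v_0..v_k] = sum_i (-1)^i [v_0..^v_i..v_k] *)
Definition bdry_fun (F : fieldType) (X : finType) (c : chain F X) : chain F X :=
  [ffun t : {set X} =>
     \sum_(s : {set X} | (t \subset s) && (#|s| == #|t|.+1)%N)
        \sum_(x in s :\: t) (-1) ^+ pos_in s x * c s].

Definition bdry (F : fieldType) (X : finType) : 'End(chain F X) :=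
  linfun (@bdry_fun F X).

Definition simplex_chain (F : fieldType) (X : finType) (s : {set X}) : chain F X :=
  [ffun t => (t == s)%:R].

Definition Cspace (F : fieldType) (X : finType) (k : nat) (K : pred {set X})
  : {vspace chain F X} :=
  <<[seq simplex_chain F s | s <- enum [pred s : {set X} | K s && (#|s| == k.+1)%N]]>>%VS.

Definition cycles (F : fieldType) (X : finType) (k : nat) (K : pred {set X})
  : {vspace chain F X} :=
  (Cspace F k K :&: lker (bdry F X))%VS.

Definition boundaries (F : fieldType) (X : finType) (k : nat) (K : pred {set X})
  : {vspace chain F X} :=
  (bdry F X @: Cspace F k.+1 K)%VS.

(* rank of H_k(K) -> H_k(L) induced by an inclusion K ⊆ L:
   dim Z_k(K) / (Z_k(K) ∩ B_k(L))  *)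
Definition hom_rank (F : fieldType) (X : finType) (k : nat) (K L : pred {set X}) : nat :=
  (\dim (cycles F k K) - \dim (cycles F k K :&: boundaries F k L))%N.

Record R6 (R : realType) := mkR6 { c1 : R; c2 : R; c3 : R; c4 : R; c5 : R; c6 : R }.

Definition le6 (R : realType) (a b : R6 R) : Prop :=
  [/\ c1 a <= c1 b, c2 b <= c2 a, c3 b <= c3 a,
      c4 b <= c4 a & (c5 a <= c5 b /\ c6 a <= c6 b)].

Definition admissible (R : realType) (a : R6 R) : Prop :=
  [/\ c1 a <= c2 a, c4 a <= c5 a, 0 <= c3 a /\ 0 <= c6 a,
      (c4 a <= c1 a /\ c2 a <= c5 a) & c3 a <= c6 a].

Definition trivially_nonadmissible (R : realType) (a : R6 R) : Prop :=
  ~ exists b : R6 R, [/\ le6 b a, b <> a & admissible b].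

Definition rk (R : realType) (F : fieldType) (k : nat) (X : finType)
  (d : R -> X -> X -> R) (a : R6 R) : \bar R :=
  if `[< admissible a >] then
    ((hom_rank F k (rips (bigvee d (c1 a) (c2 a)) (c3 a))
                   (rips (bigvee d (c4 a) (c5 a)) (c6 a)))%:R)%:E
  else if `[< trivially_nonadmissible a >] then +oo%E else 0%E.

Definition shift6 (R : realType) (a : R6 R) (e : R) : R6 R :=
  mkR6 (c1 a + e) (c2 a - e) (c3 a - e) (c4 a - e) (c5 a + e) (c6 a + e).

Definition d_I (R : realType) (f g : R6 R -> \bar R) : \bar R :=
  ereal_inf [set (e%:E)%E | e in [set e : R | 0 <= e /\
    forall a : R6 R, (g (shift6 a e) <= f a)%E /\ (f (shift6 a e) <= g a)%E]].

From HB Require Import structures.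
From mathcomp Require Import all_boot all_order all_algebra.
From mathcomp Require Import all_classical all_reals all_analysis.
From mathcomp Require Import ring lra zify.
Set Implicit Arguments. Unset Strict Implicit. Unset Printing Implicit Defensive.
Import Order.TTheory GRing.Theory Num.Theory.
Local Open Scope ring_scope.

(* An eps-tripod between the two spaces gives, through sections of its two
   surjections, vertex maps f : Y -> X and g : X -> Y.  After shifting every
   parameter of a by 2 eps, f is simplicial between the source Rips complexes,
   g between the target ones, and g o f is contiguous to the identity in the
   target complex of Y, because the tripod controls pairs of points coming
   from different sections.  So H_k(K_Y) -> H_k(L_Y) factors through
   H_k(K_X) -> H_k(L_X) and rk_k(Y)(a + 2 eps) <= rk_k(X)(a); the
   non-admissible cases only involve the order of R^6.  Contiguity becomes a
   chain homotopy by moving one vertex at a time, each step being the cone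
   with apex the new image of that vertex. *)

Definition before (V : finType) (x y : V) : bool := (enum_rank x < enum_rank y)%N.

Section VertexOrder.
Variable V : finType.
Implicit Types (T : {set V}) (x y : V).

Lemma before_irr x : before x x = false.
Proof. by rewrite /before ltnn. Qed.

Lemma before_total x y : x != y -> before x y = ~~ before y x.
Proof.
move=> nxy; rewrite /before; case: ltngtP => //= h.
by case/eqP: nxy; apply: enum_rank_inj; apply: ord_inj.
Qed.

Lemma pos_in_setU1 T x y :
  x \notin T -> pos_in (x |: T) y = (pos_in T y + before x y)%N.
Proof.
move=> xT; rewrite /pos_in /before.
set A := [set z in T | _].
have -> : [set z in x |: T | (enum_rank z < enum_rank y)%N] =
    (if (enum_rank x < enum_rank y)%N then x |: A else A).
  apply/setP => z; rewrite !inE; case: (eqVneq z x) => [->|nzx] /=;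
    case: ifP => h; rewrite ?inE ?eqxx ?h ?(negbTE xT) ?(negbTE nzx) //=.
case: ifP => _; last by rewrite addn0.
by rewrite cardsU1 inE (negbTE xT) addn1.
Qed.

Lemma pos_in_setD1 T x y :
  x \in T -> pos_in T y = (pos_in (T :\ x) y + before x y)%N.
Proof. by move=> xT; rewrite -{1}(finset.setD1K xT) pos_in_setU1 // !inE eqxx. Qed.

Lemma pos_in_setU1_self T x : x \notin T -> pos_in (x |: T) x = pos_in T x.
Proof. by move=> xT; rewrite pos_in_setU1 // before_irr addn0. Qed.

Lemma pos_in_setD1_self T x : x \in T -> pos_in (T :\ x) x = pos_in T x.
Proof. by move=> xT; rewrite (pos_in_setD1 x xT) before_irr addn0. Qed.

End VertexOrder.

Section Signs.
Variable F : fieldType.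
Local Notation sgn n := ((-1) ^+ n : F).

Lemma signK n : sgn n * sgn n = 1.
Proof. by rewrite -exprD -signr_odd addnn odd_double. Qed.

Lemma sign_before (V : finType) (x y : V) :
  x != y -> sgn (before x y) * sgn (before y x) = -1.
Proof. by move/before_total ->; case: before; rewrite ?mulr1 ?mul1r. Qed.

End Signs.

Section Cone.
Variables (F : fieldType) (V : finType).
Local Notation sgn n := ((-1) ^+ n : F).
Local Notation chain := (chain F V).
Local Notation e_ := (simplex_chain F).

Lemma simplex_chainE (S T : {set V}) : e_ S T = (T == S)%:R.
Proof. by rewrite ffunE. Qed.

Lemma scalerFE (k x : F^o) : k *: x = k * x. Proof. by []. Qed.

(* The join with [a]; the sign moves [a] from the front to its place in the
   vertex order, so that [cone a [v0, ..., vk] = [a, v0, ..., vk]]. *)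
Definition cone (a : V) (c : chain) : chain :=
  [ffun T : {set V} => if a \in T then sgn (pos_in T a) * c (T :\ a) else 0].

Lemma cone_is_linear a : linear (cone a).
Proof.
move=> k c d; apply/ffunP => T; rewrite !ffunE.
by case: ifP => _; rewrite !scalerFE ?mulr0 ?addr0 //; ring.
Qed.
HB.instance Definition _ a :=
  GRing.isLinear.Build F chain chain *:%R (cone a) (cone_is_linear a).

Lemma cone_simplex a S :
  cone a (e_ S) = if a \in S then 0 else sgn (pos_in S a) *: e_ (a |: S).
Proof.
apply/ffunP => T; rewrite !ffunE.
case: (boolP (a \in S)) => aS; case: (boolP (a \in T)) => aT; rewrite ?ffunE //.
- case: eqP => h; last by rewrite mulr0.
  by move: aS; rewrite -h !inE eqxx.
- rewrite ?ffunE scalerFE; case: (eqVneq (T :\ a) S) => h.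
    by rewrite -h finset.setD1K // eqxx pos_in_setD1_self.
  case: eqP => h2; last by rewrite !mulr0.
  by case/eqP: h; rewrite h2 setU1K.
- rewrite ?ffunE scalerFE; case: eqP => h; last by rewrite mulr0.
  by move: aT; rewrite h !inE eqxx.
Qed.

Lemma cone_anticomm a b c : cone a (cone b c) = - cone b (cone a c).
Proof.
apply/ffunP => T; rewrite !ffunE.
case: (eqVneq a b) => [<-|nab].
  by rewrite !inE eqxx /=; case: ifP => _; rewrite ?mulr0 ?oppr0.
rewrite !inE nab eq_sym nab /=.
case: (boolP (a \in T)) => aT; case: (boolP (b \in T)) => bT /=;
  rewrite ?mulr0 ?oppr0 //.
have -> : T :\ b :\ a = T :\ a :\ b by rewrite !finset.setDDl finset.setUC.
rewrite (pos_in_setD1 b aT) (pos_in_setD1 a bT) !exprD.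
have := sign_before F nab.
set x := sgn (before a b); set y := sgn (before b a) => hxy.
set u := sgn (pos_in (T :\ a) b); set v := sgn (pos_in (T :\ b) a).
rewrite -[RHS]mulN1r -hxy.
rewrite [RHS](_ : _ = (x * x) * (u * y * (v * c (T :\ a :\ b)))); last by ring.
rewrite /x signK mul1r; ring.
Qed.

End Cone.

Section Boundary.
Variables (F : fieldType) (V : finType).
Local Notation sgn n := ((-1) ^+ n : F).
Local Notation chain := (chain F V).
Local Notation e_ := (simplex_chain F).
Local Notation bd := (bdry F V).

Lemma bdry_funE (c : chain) :
  bdry_fun c = [ffun t : {set V} => \sum_(x | x \notin t) sgn (pos_in t x) * c (x |: t)].
Proof.
apply/ffunP => t; rewrite !ffunE.
rewrite (exchange_big_dep (fun x => x \notin t)) /=; last first.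
  by move=> s x _; rewrite inE => /andP[].
apply: eq_bigr => x xt.
rewrite (big_pred1 (x |: t)); first by rewrite pos_in_setU1_self.
move=> s; apply/idP/idP.
  case/andP => /andP[ts /eqP cs]; rewrite inE => /andP[_ xs].
  apply/eqP/eqP; rewrite eq_sym eqEcard cs cardsU1 xt add1n leqnn andbT.
  by rewrite finset.subUset finset.sub1set xs ts.
move/eqP => ->; rewrite finset.subsetUr cardsU1 xt add1n eqxx /= !inE eqxx.
by rewrite xt.
Qed.

Lemma bdry_fun_is_linear : linear (@bdry_fun F V).
Proof.
move=> k c d; rewrite !bdry_funE; apply/ffunP => t.
rewrite !ffunE scalerFE mulr_sumr -big_split.
by apply: eq_bigr => x _; rewrite !ffunE scalerFE mulrDr mulrCA.
Qed.
HB.instance Definition _ :=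
  GRing.isLinear.Build F chain chain *:%R (@bdry_fun F V) bdry_fun_is_linear.

Lemma bdryE c :
  bd c = [ffun t : {set V} => \sum_(x | x \notin t) sgn (pos_in t x) * c (x |: t)].
Proof. by rewrite lfunE /= bdry_funE. Qed.

Lemma bdry_simplex0 : bd (e_ finset.set0) = 0.
Proof.
apply/ffunP => t; rewrite bdryE !ffunE big1 // => x _; rewrite simplex_chainE.
case: eqP => h; last by rewrite mulr0.
by have := setU11 x t; rewrite h inE.
Qed.

Lemma bdry_cone a c : bd (cone a c) = c - cone a (bd c).
Proof.
apply/ffunP => t; rewrite !bdryE !ffunE.
case: (boolP (a \in t)) => at_; last first.
  rewrite subr0 (bigD1 a) //= big1; last first.
    move=> x /andP[_ xa]; rewrite ffunE !inE eq_sym (negbTE xa) (negbTE at_) /=.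
    by rewrite mulr0.
  by rewrite addr0 ffunE setU11 pos_in_setU1_self // setU1K // mulrA signK mul1r.
have aa : a \notin t :\ a by rewrite !inE eqxx.
rewrite (bigD1 a aa) /= finset.setD1K // pos_in_setD1_self // mulrDr mulrA signK.
rewrite mul1r opprD addrA subrr add0r mulr_sumr -sumrN.
rewrite [RHS](eq_bigl (fun x => x \notin t)); last first.
  move=> x; rewrite !inE negb_and negbK.
  by case: eqP => [->|] /=; rewrite ?at_ ?andbT.
apply: eq_bigr => x xt.
have xa : x != a by apply: contraNneq xt => ->.
rewrite ffunE !inE at_ orbT.
have -> : (x |: t) :\ a = x |: (t :\ a).
  apply/setP => z; rewrite !inE; case: (eqVneq z a) => [->|] //=.
  by rewrite eq_sym (negbTE xa).
rewrite (pos_in_setD1 x at_) (pos_in_setU1 a xt) !exprD.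
have := sign_before F xa.
set p := sgn (before x a); set q := sgn (before a x) => hpq.
set u := sgn (pos_in (t :\ a) x); set v := sgn (pos_in (t :\ a) a).
rewrite -[RHS]mulN1r -hpq; ring.
Qed.

End Boundary.

Section OrientedSimplices.
Variable F : fieldType.
Local Notation sgn n := ((-1) ^+ n : F).
Local Notation e_ := (simplex_chain F).

(* [osimplex [:: v0; ...; vk]] is the oriented simplex [v0, ..., vk], built as
   an iterated cone over the empty simplex; it vanishes when a vertex repeats. *)
Fixpoint osimplex (V : finType) (l : seq V) : chain F V :=
  if l is a :: l' then cone a (osimplex l') else e_ finset.set0.

Lemma osimplexE (V : finType) (l : seq V) :
  exists n, osimplex l = (if uniq l then sgn n else 0) *: e_ [set:: l].
Proof.
elim: l => [|a l [n IH]] /=.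
  by exists 0%N; rewrite finset.set_nil expr0 scale1r.
rewrite IH linearZ /= cone_simplex finset.set_cons inE.
case: (boolP (a \in l)) => al /=; first by exists 0%N; rewrite scaler0 scale0r.
exists (n + pos_in [set:: l] a)%N; rewrite scalerA exprD.
by case: (uniq l); rewrite ?mul0r ?scale0r.
Qed.

Lemma osimplex_nonuniq (V : finType) (l : seq V) : ~~ uniq l -> osimplex l = 0.
Proof. by move=> /negbTE h; have [n ->] := osimplexE l; rewrite h scale0r. Qed.

Lemma osimplex_cat_cons (V : finType) (p q : seq V) a :
  osimplex (p ++ a :: q) = sgn (size p) *: osimplex (a :: p ++ q).
Proof.
elim: p => [|x p IH] /=; first by rewrite expr0 scale1r.
by rewrite IH linearZ /= cone_anticomm scalerN -scaleNr exprS mulN1r.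
Qed.

Lemma osimplex_perm (V : finType) (l l' : seq V) : perm_eq l l' ->
  exists n, forall (W : finType) (f : V -> W),
    osimplex (map f l) = sgn n *: osimplex (map f l').
Proof.
elim: l l' => [|a m IH] l' hp.
  exists 0%N => W f; move: hp; rewrite perm_sym => /perm_nilP ->.
  by rewrite expr0 scale1r.
have al' : a \in l' by rewrite -(perm_mem hp) mem_head.
case/splitPr: al' hp => p q hp.
have hm : perm_eq m (p ++ q).
  rewrite -(perm_cons a); apply: (@perm_trans _ (p ++ a :: q)) => //.
  by rewrite (perm_catCA p [:: a] q).
have [n IHn] := IH _ hm.
exists (n + size p)%N => W f.
rewrite /= IHn linearZ /= !map_cat osimplex_cat_cons size_map scalerA exprD.
by rewrite -mulrA signK mulr1.
Qed.

Definition enum_sign (V : finType) (S : {set V}) : F := osimplex (enum S) S.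

Lemma osimplex_enum (V : finType) (S : {set V}) :
  osimplex (enum S) = enum_sign S *: e_ S.
Proof.
have [n h] := osimplexE (enum S).
by rewrite /enum_sign h enum_uniq set_enum ffunE simplex_chainE eqxx scalerFE mulr1.
Qed.

Lemma enum_signK (V : finType) (S : {set V}) : enum_sign S * enum_sign S = 1.
Proof.
have [n h] := osimplexE (enum S).
by rewrite /enum_sign h enum_uniq set_enum ffunE simplex_chainE eqxx scalerFE mulr1 signK.
Qed.

Lemma simplex_osimplex (V : finType) (S : {set V}) :
  e_ S = enum_sign S *: osimplex (enum S).
Proof. by rewrite osimplex_enum scalerA enum_signK scale1r. Qed.

Lemma perm_enum_setD1 (V : finType) (v : V) (S : {set V}) :
  v \in S -> perm_eq (enum S) (v :: enum (S :\ v)).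
Proof.
move=> vS; apply: uniq_perm; rewrite ?enum_uniq //=.
  by rewrite enum_uniq andbT mem_enum !inE eqxx.
by move=> x; rewrite inE !mem_enum !inE; case: eqP => [->|].
Qed.

Lemma simplex_osimplex_cons (V : finType) (v : V) (S : {set V}) :
  v \in S -> exists k : F, e_ S = k *: osimplex (v :: enum (S :\ v)).
Proof.
move=> /perm_enum_setD1 /osimplex_perm [n /(_ V id)].
rewrite !map_id => he.
by exists (enum_sign S * sgn n); rewrite simplex_osimplex he scalerA.
Qed.

Lemma chain_simplex_sum (V : finType) (c : chain F V) : c = \sum_S c S *: e_ S.
Proof.
apply/ffunP => T; rewrite sum_ffunE (bigD1 T) //= big1.
  by rewrite addr0 ffunE simplex_chainE eqxx scalerFE mulr1.
by move=> S nST; rewrite ffunE simplex_chainE eq_sym (negbTE nST) scalerFE mulr0.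
Qed.

End OrientedSimplices.

Section ChainMaps.
Variable F : fieldType.
Local Notation e_ := (simplex_chain F).
Local Notation bd := (bdry F _).

Definition push_def (V W : finType) (f : V -> W) (c : chain F V) : chain F W :=
  \sum_(S : {set V}) c S *: (enum_sign F S *: osimplex F (map f (enum S))).
Fact push_key : unit. Proof. by []. Qed.
Definition push := locked_with push_key push_def.
Canonical push_unlockable := [unlockable fun push].

Lemma push_is_linear (V W : finType) (f : V -> W) : linear (push f).
Proof.
move=> k c d; rewrite unlock /push_def scaler_sumr -big_split; apply: eq_bigr => S _.
by rewrite !ffunE scalerDl scalerFE !scalerA.
Qed.
HB.instance Definition _ (V W : finType) (f : V -> W) :=
  GRing.isLinear.Build F (chain F V) (chain F W) *:%R (push f) (push_is_linear f).

Lemma push_simplex (V W : finType) (f : V -> W) (S : {set V}) :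
  push f (e_ S) = enum_sign F S *: osimplex F (map f (enum S)).
Proof.
rewrite unlock /push_def (bigD1 S) //= big1; first by rewrite addr0 simplex_chainE eqxx scale1r.
by move=> T nTS; rewrite simplex_chainE (negbTE nTS) scale0r.
Qed.

Lemma push_osimplex_enum (V W : finType) (f : V -> W) (S : {set V}) :
  push f (osimplex F (enum S)) = osimplex F (map f (enum S)).
Proof. by rewrite osimplex_enum linearZ /= push_simplex scalerA enum_signK scale1r. Qed.

Lemma push_osimplex (V W : finType) (f : V -> W) (l : seq V) :
  push f (osimplex F l) = osimplex F (map f l).
Proof.
case: (boolP (uniq l)) => ul; last first.
  rewrite osimplex_nonuniq // linear0 osimplex_nonuniq //.
  by apply: contra ul; apply: map_uniq.
have hp : perm_eq l (enum [set:: l]).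
  by apply: uniq_perm => //; [exact: enum_uniq | move=> x; rewrite mem_enum inE].
have [n hn] := osimplex_perm F hp.
have := hn V id; rewrite !map_id => ->.
by rewrite linearZ /= push_osimplex_enum hn.
Qed.

Lemma eq_linear_osimplex (V W : finType) (g h : {linear chain F V -> chain F W}) :
  (forall S : {set V}, g (osimplex F (enum S)) = h (osimplex F (enum S))) -> g =1 h.
Proof.
move=> gh c; rewrite (chain_simplex_sum c) !linear_sum; apply: eq_bigr => S _.
by rewrite simplex_osimplex !linearZ /= gh.
Qed.

Lemma push_cone (V W : finType) (f : V -> W) a c :
  push f (cone a c) = cone (f a) (push f c).
Proof.
apply: (@eq_linear_osimplex _ _ (push f \o cone a) (cone (f a) \o push f)) => S /=.
by rewrite -[cone a _]/(osimplex F (a :: _)) !push_osimplex.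
Qed.

Lemma push_bdry (V W : finType) (f : V -> W) c : push f (bd c) = bd (push f c).
Proof.
apply: (@eq_linear_osimplex _ _ (push f \o bd) (bd \o push f)) => S /=.
rewrite push_osimplex; elim: (enum S) => [|a l IH] /=.
  by rewrite !bdry_simplex0 linear0.
by rewrite !bdry_cone linearB /= push_cone IH push_osimplex.
Qed.

Lemma push_comp (U V W : finType) (f : U -> V) (g : V -> W) c :
  push g (push f c) = push (g \o f) c.
Proof.
apply: (@eq_linear_osimplex _ _ (push g \o push f) (push (g \o f))) => S /=.
by rewrite !push_osimplex map_comp.
Qed.

Lemma eq_push (V W : finType) (f g : V -> W) : f =1 g -> push f =1 push g.
Proof. by move=> fg c; rewrite unlock; apply: eq_bigr => S _; rewrite (eq_map fg). Qed.

Lemma push_id (V : finType) (c : chain F V) : push id c = c.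
Proof.
rewrite [in LHS](chain_simplex_sum c) linear_sum [in RHS](chain_simplex_sum c).
by apply: eq_bigr => S _; rewrite linearZ /= push_simplex map_id -simplex_osimplex.
Qed.

End ChainMaps.

Section ContiguityHomotopy.
Variable F : fieldType.
Local Notation e_ := (simplex_chain F).
Local Notation bd := (bdry F _).

Definition star (V : finType) (v : V) (c : chain F V) : chain F V :=
  [ffun T : {set V} => if v \in T then c T else 0].

Lemma star_is_linear (V : finType) (v : V) : linear (star v).
Proof.
move=> k c d; apply/ffunP => T; rewrite !ffunE.
by case: ifP => _; rewrite ?scalerFE ?mulr0 ?addr0.
Qed.
HB.instance Definition _ (V : finType) (v : V) :=
  GRing.isLinear.Build F (chain F V) (chain F V) *:%R (star v) (star_is_linear v).

Lemma star_cone (V : finType) (v : V) c : star v (cone v c) = cone v c.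
Proof. by apply/ffunP => T; rewrite !ffunE; case: (v \in T). Qed.

Lemma star_osimplex_notin (V : finType) (v : V) l :
  v \notin l -> star v (osimplex F l) = 0.
Proof.
move=> vl; have [n ->] := osimplexE F l; apply/ffunP => T; rewrite !ffunE.
case: ifP => // vT; rewrite scalerFE; case: eqP => [h|]; last by rewrite mulr0.
by move: vT; rewrite h inE (negbTE vl).
Qed.

Lemma star_simplex_notin (V : finType) (v : V) (S : {set V}) :
  v \notin S -> star v (e_ S) = 0.
Proof.
move=> vS; apply/ffunP => T; rewrite !ffunE.
by case: ifP => // vT; case: eqP => // h; move: vT; rewrite h (negbTE vS).
Qed.

Lemma star_bdry_simplex_notin (V : finType) (v : V) (S : {set V}) :
  v \notin S -> star v (bd (e_ S)) = 0.
Proof.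
move=> vS; apply/ffunP => T; rewrite bdryE !ffunE.
case: ifP => // vT; rewrite big1 // => x _; rewrite simplex_chainE.
case: eqP => [h|]; last by rewrite mulr0.
by move: vS; rewrite -h !inE vT orbT.
Qed.

Definition homotopy (V W : finType) (u w : V -> W) (v : V) (c : chain F V) :
  chain F W := cone (w v) (push u (star v c)).

Lemma homotopy_is_linear (V W : finType) (u w : V -> W) v : linear (homotopy u w v).
Proof. by move=> k c d; rewrite /homotopy !linearP. Qed.
HB.instance Definition _ (V W : finType) (u w : V -> W) (v : V) :=
  GRing.isLinear.Build F (chain F V) (chain F W) *:%R (homotopy u w v)
    (homotopy_is_linear u w v).

Section AgreeOffVertex.
Variables (V W : finType) (u w : V -> W) (v : V).
Hypothesis uw : forall x, x != v -> u x = w x.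
Local Notation D := (homotopy u w v).

Lemma homotopy_osimplex_cons (m : seq V) : v \notin m ->
  bd (D (osimplex F (v :: m))) + D (bd (osimplex F (v :: m))) =
  push u (osimplex F (v :: m)) - push w (osimplex F (v :: m)).
Proof.
move=> vm.
have um : push u (osimplex F m) = push w (osimplex F m).
  rewrite !push_osimplex; congr (osimplex F _); apply/eq_in_map => x xm.
  by apply: uw; apply: contraNneq vm => <-.
rewrite /homotopy /= star_cone bdry_cone bdry_cone linearB /=.
rewrite star_osimplex_notin // sub0r linearN /= star_cone -push_bdry bdry_cone.
rewrite linearB /= [push w _]push_cone -um [cone (w v) (_ - _)]linearB linearN /=.
by rewrite opprB addrA addrAC addrK.
Qed.

Lemma homotopyP c : bd (D c) + D (bd c) = push u c - push w c.
Proof.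
rewrite (chain_simplex_sum c) !linear_sum -!big_split /=; apply: eq_bigr => S _.
rewrite !linearZ /= -!scalerDr; congr (_ *: _).
case: (boolP (v \in S)) => vS.
  have [k ->] := simplex_osimplex_cons F vS.
  rewrite !linearZ /= -!scalerDr; congr (_ *: _).
  by apply: homotopy_osimplex_cons; rewrite mem_enum !inE eqxx.
rewrite /homotopy star_simplex_notin // star_bdry_simplex_notin // !linear0 addr0.
rewrite !push_simplex; suff -> : map u (enum S) = map w (enum S) by rewrite subrr.
apply/eq_in_map => x; rewrite mem_enum => xS.
by apply: uw; apply: contraNneq vS => <-.
Qed.

End AgreeOffVertex.

End ContiguityHomotopy.

Section ChainComplexes.
Variable F : fieldType.
Local Notation e_ := (simplex_chain F).
Local Notation bd := (bdry F _).

Definition down_closed (V : finType) (L : pred {set V}) :=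
  forall A B : {set V}, L A -> B \subset A -> B != finset.set0 -> L B.

Definition simplicial_on (V W : finType) k (K : pred {set V}) (K' : pred {set W})
    (f : V -> W) :=
  forall S, K S -> #|S| = k.+1 -> K' (f @: S).

Definition contiguous_on (V W : finType) k (K : pred {set V}) (L : pred {set W})
    (u w : V -> W) :=
  forall S, K S -> #|S| = k.+1 -> L (u @: S :|: w @: S).

Lemma simplex_in_Cspace (V : finType) k (K : pred {set V}) (S : {set V}) :
  K S -> #|S| = k.+1 -> e_ S \in Cspace F k K.
Proof.
move=> KS cS; apply: memv_span; apply/mapP; exists S => //.
by rewrite mem_enum inE /= KS cS eqxx.
Qed.

Lemma linear_Cspace_sub (V W : finType) (g : {linear chain F V -> chain F W}) k
    (K : pred {set V}) (U : {vspace chain F W}) :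
  (forall S, K S -> #|S| = k.+1 -> g (e_ S) \in U) ->
  forall c, c \in Cspace F k K -> g c \in U.
Proof.
move=> gK c cC.
have sub : (linfun g @: Cspace F k K <= U)%VS.
  rewrite limg_span; apply/span_subvP => y /mapP[x /mapP[S SK ->] ->].
  by rewrite lfunE; move: SK; rewrite mem_enum inE /= => /andP[KS /eqP cS]; apply: gK.
by rewrite -[g c](lfunE g); apply: (subvP sub); apply: memv_img.
Qed.

Lemma osimplex_in_Cspace (V : finType) k (K : pred {set V}) (l : seq V) :
  (uniq l -> K [set:: l] /\ size l = k.+1) -> osimplex F l \in Cspace F k K.
Proof.
move=> lK; have [n ->] := osimplexE F l.
case: (boolP (uniq l)) => ul; last by rewrite scale0r mem0v.
have [KS sl] := lK ul; apply: memvZ; apply: simplex_in_Cspace => //.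
by rewrite -sl cardsE; apply/card_uniqP.
Qed.

Lemma set_map_enum (V W : finType) (f : V -> W) (S : {set V}) :
  [set:: map f (enum S)] = f @: S.
Proof.
apply/setP => x; rewrite inE; apply/mapP/imsetP => [[y]|[y]];
  by rewrite ?mem_enum => yS ->; exists y; rewrite ?mem_enum.
Qed.

Lemma push_Cspace (V W : finType) (f : V -> W) k (K : pred {set V})
    (K' : pred {set W}) :
  simplicial_on k K K' f -> forall c, c \in Cspace F k K -> push f c \in Cspace F k K'.
Proof.
move=> fK; apply: linear_Cspace_sub => S KS cS.
rewrite /= push_simplex; apply: memvZ; apply: osimplex_in_Cspace => _.
by rewrite set_map_enum size_map -cardE cS; split => //; apply: fK.
Qed.

Lemma homotopy_Cspace (V W : finType) (u w : V -> W) (v : V) k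
    (K : pred {set V}) (L : pred {set W}) :
  contiguous_on k K L u w -> down_closed L ->
  forall c, c \in Cspace F k K -> homotopy u w v c \in Cspace F k.+1 L.
Proof.
move=> uwK dL; apply: linear_Cspace_sub => S KS cS /=.
case: (boolP (v \in S)) => vS; last by rewrite /homotopy star_simplex_notin // !linear0 mem0v.
have [r ->] := simplex_osimplex_cons F vS; rewrite linearZ; apply: memvZ.
rewrite /= /homotopy star_cone -[cone v _]/(osimplex F (v :: _)) push_osimplex.
rewrite -[cone _ _]/(osimplex F (w v :: map u (v :: enum (S :\ v)))).
apply: osimplex_in_Cspace => _; split.
  apply: dL (uwK S KS cS) _ _.
    apply/fintype.subsetP => x; rewrite !inE => /orP[/eqP ->|].
      by rewrite imset_f ?orbT.
    case/orP => [/eqP ->|/mapP[y]]; first by rewrite imset_f.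
    by rewrite mem_enum !inE => /andP[_ yS] ->; rewrite imset_f.
  by apply/finset.set0Pn; exists (w v); rewrite inE mem_head.
rewrite /= size_map -cardE.
by move: cS; rewrite (cardsD1 v S) vS add1n => [[->]].
Qed.

Lemma mem_cycles (V : finType) k (K : pred {set V}) (z : chain F V) :
  (z \in cycles F k K) = (z \in Cspace F k K) && (bd z == 0).
Proof. by rewrite memv_cap memv_ker. Qed.

Lemma bdry_boundaries (V : finType) k (L : pred {set V}) (c : chain F V) :
  c \in Cspace F k.+1 L -> bd c \in boundaries F k L.
Proof. exact: memv_img. Qed.

Lemma push_contiguous_boundary (V : finType) (u w : V -> V) (v : V) k
    (K L : pred {set V}) (z : chain F V) :
  (forall x, x != v -> u x = w x) -> contiguous_on k K L u w -> down_closed L ->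
  z \in cycles F k K -> push u z - push w z \in boundaries F k L.
Proof.
move=> uw uwK dL; rewrite mem_cycles => /andP[zC /eqP bz].
rewrite -(homotopyP uw) bz linear0 addr0.
by apply: bdry_boundaries; apply: homotopy_Cspace uwK dL z zC.
Qed.

(* Change [id] into [h] one vertex at a time, along the enumeration of [V];
   consecutive maps agree off one vertex and are contiguous. *)
Lemma push_contiguous_id_boundary (V : finType) (h : V -> V) k
    (K L : pred {set V}) (z : chain F V) :
  contiguous_on k K L h id -> down_closed L ->
  z \in cycles F k K -> push h z - z \in boundaries F k L.
Proof.
move=> hK dL zc.
pose hi (i : nat) (x : V) := if (enum_rank x < i)%N then h x else x.
have hiK i j : contiguous_on k K L (hi i) (hi j).
  move=> S KS cS; apply: dL (hK S KS cS) _ _.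
    have sub l : hi l @: S \subset h @: S :|: id @: S.
      apply/fintype.subsetP => _ /imsetP[x xS ->]; rewrite /hi.
      by case: ifP => _; rewrite inE imset_f ?orbT.
    by rewrite finset.subUset !sub.
  have /finset.set0Pn [x xS] : S != finset.set0 by rewrite -card_gt0 cS.
  by apply/finset.set0Pn; exists (hi i x); rewrite inE imset_f.
suff /(_ #|V|) : forall i, push (hi i) z - z \in boundaries F k L.
  by rewrite (eq_push (g := h)) // => x; rewrite /hi ltn_ord.
elim => [|i IH].
  by rewrite (eq_push (g := id)) ?push_id ?subrr ?mem0v.
have [iV|iV] := ltnP i #|V|; last first.
  rewrite (eq_push (g := hi i)) // => x; rewrite /hi.
  by rewrite !(leq_trans (ltn_ord (enum_rank x))) ?(leqW iV).
rewrite -(subrK (push (hi i) z) (push (hi i.+1) z)) -addrA; apply: memvD IH.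
apply: (push_contiguous_boundary (v := enum_val (Ordinal iV))) (hiK _ _) dL zc.
move=> x xv; rewrite /hi ltnS leq_eqVlt.
suff /negbTE -> : nat_of_ord (enum_rank x) != i by [].
apply: contra xv => /eqP hx; apply/eqP.
by rewrite -(enum_rankK x); congr enum_val; apply: ord_inj.
Qed.

End ChainComplexes.

(* [g] induces an injection of [A / (A :&: B)] into [A' / (A' :&: B')]. *)
Lemma dimv_quot_cap_le (K : fieldType) (U U' : vectType K) (A B : {vspace U})
    (A' B' : {vspace U'}) (g : 'Hom(U, U')) :
  (g @: A <= A')%VS -> (forall a, a \in A -> g a \in B' -> a \in B) ->
  (\dim A - \dim (A :&: B) <= \dim A' - \dim (A' :&: B'))%N.
Proof.
move=> gA gB.
set M := (g @: A)%VS; set P := (A :&: B)%VS.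
have dimA := limg_ker_dim g A.
have dimP := limg_ker_dim g P.
have kerA : (A :&: lker g <= P :&: lker g)%VS.
  apply/subvP => a /memv_capP [aA ak]; rewrite !memv_cap ak andbT aA /=.
  by apply: gB aA _; rewrite memv_ker in ak; rewrite (eqP ak) mem0v.
have MB : (M :&: B' <= g @: P)%VS.
  apply/subvP => _ /memv_capP [/memv_imgP [a aA ->] aB]; apply: memv_img.
  by rewrite memv_cap aA; apply: gB.
have dimMA := dimv_sum_cap M (A' :&: B').
have MA : (M + (A' :&: B') <= A')%VS by rewrite subv_add gA capvSl.
have MAB : (M :&: (A' :&: B') <= M :&: B')%VS by apply: capvS => //; apply: capvSr.
have := dimvS kerA; have := dimvS MB; have := dimvS MA; have := dimvS MAB.
have := dimvS (capvSl A' B').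
rewrite -/M -/P in dimA dimP dimMA *; lia.
Qed.

Section HomRankComparison.
Variables (F : fieldType) (X Y : finType) (k : nat).
Variables (KX LX : pred {set X}) (KY LY : pred {set Y}).

Lemma hom_rank_le_factor (f : Y -> X) (g : X -> Y) :
  simplicial_on k KY KX f -> simplicial_on k.+1 LX LY g ->
  contiguous_on k KY LY (g \o f) id -> down_closed LY ->
  (hom_rank F k KY LY <= hom_rank F k KX LX)%N.
Proof.
move=> fK gL gfK dL; rewrite /hom_rank.
apply: (@dimv_quot_cap_le _ _ _ _ _ _ _ (linfun (push f))).
  apply/subvP => _ /memv_imgP [a aZ ->]; rewrite lfunE /=.
  move: aZ; rewrite !mem_cycles => /andP[aC /eqP ba].
  by rewrite (push_Cspace fK) //= -push_bdry ba linear0.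
move=> a aZ; rewrite lfunE /= => /memv_imgP [b bC fab].
have gfaB : push (g \o f) a \in boundaries F k LY.
  rewrite -push_comp fab push_bdry; apply: bdry_boundaries.
  exact: push_Cspace gL b bC.
have := memvB gfaB (push_contiguous_id_boundary gfK dL aZ).
by rewrite opprB addrC subrK.
Qed.

End HomRankComparison.

Section RipsComplexes.
Variable R : realType.

Lemma ripsP (V : finType) (d : V -> V -> R) r S :
  rips d r S -> forall x y, x \in S -> y \in S -> d x y <= r.
Proof. by case/andP => _ /forall_inP dS x y /dS /forall_inP; apply. Qed.

Lemma rips_down_closed (V : finType) (d : V -> V -> R) r : down_closed (rips d r).
Proof.
move=> A B /ripsP dA BA Bn; rewrite /rips Bn /=.
by apply/forall_inP => x xB; apply/forall_inP => y yB; apply: dA;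
  apply: (fintype.subsetP BA).
Qed.

Lemma rips_imsetU (V W : finType) (u w : V -> W) (d : V -> V -> R) r
    (d' : W -> W -> R) r' S :
  rips d r S ->
  (forall x y, d x y <= r -> [/\ d' (u x) (u y) <= r', d' (u x) (w y) <= r',
                                 d' (w x) (u y) <= r' & d' (w x) (w y) <= r']) ->
  rips d' r' (u @: S :|: w @: S).
Proof.
move=> dS uw; have /andP[/finset.set0Pn[x xS] _] := dS.
apply/andP; split.
  by apply/finset.set0Pn; exists (u x); rewrite inE imset_f.
have {}uw x y : x \in S -> y \in S -> _ := fun xS yS => uw x y (ripsP dS xS yS).
apply/forall_inP => _ /setUP[] /imsetP[x' xS' ->];
  apply/forall_inP => _ /setUP[] /imsetP[y' yS' ->]; by case: (uw x' y').
Qed.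

Lemma rips_imset (V W : finType) (f : V -> W) (d : V -> V -> R) r
    (d' : W -> W -> R) r' S :
  rips d r S -> (forall x y, d x y <= r -> d' (f x) (f y) <= r') ->
  rips d' r' (f @: S).
Proof.
move=> dS df; rewrite -[f @: S]finset.setUid.
by apply: rips_imsetU dS _ => x y /df dxy.
Qed.

End RipsComplexes.

Section Bigvee.
Variables (R : realType) (V : finType) (d : R -> V -> V -> R) (x y : V).
Hypothesis d_ge0 : forall t, 0 <= d t x y.

Lemma bigvee_le a b s : a <= s <= b -> bigvee d a b x y <= d s x y.
Proof.
move=> hs; apply: ge_inf; last by exists s.
by exists 0 => _ [t _ <-]; apply: d_ge0.
Qed.

Lemma bigvee_le_subinterval a b a' b' :
  a <= a' -> a' <= b' -> b' <= b -> bigvee d a b x y <= bigvee d a' b' x y.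
Proof.
move=> aa' a'b' b'b; apply: lb_le_inf.
  by exists (d a' x y); exists a' => //; rewrite /= lexx a'b'.
move=> _ [s /= /andP[a's sb'] <-]; apply: bigvee_le.
by rewrite (le_trans aa' a's) (le_trans sb' b'b).
Qed.

Lemma bigvee_lt a b c :
  a <= b -> bigvee d a b x y < c -> exists2 s, a <= s <= b & d s x y < c.
Proof.
move=> ab /inf_lt[]; first by exists (d a x y); exists a => //; rewrite /= lexx ab.
by move=> _ [s ? <-]; exists s.
Qed.

End Bigvee.

Section TripodTransfer.
Variables (R : realType) (X Y : finType).
Variables (dX : R -> X -> X -> R) (dY : R -> Y -> Y -> R).
Variables (Z : Type) (pX : Z -> X) (pY : Z -> Y) (e : R).
Hypotheses (dX_ge0 : forall t x y, 0 <= dX t x y) (e_ge0 : 0 <= e).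
Hypothesis tripodXY : forall t z z',
  bigvee dX (t - e) (t + e) (pX z) (pX z') <= dY t (pY z) (pY z') + 2 * e.

Lemma tripod_bigvee_le z z' (p q a b c : R) :
  p <= q -> a <= p - e -> q + e <= b ->
  bigvee dY p q (pY z) (pY z') <= c -> bigvee dX a b (pX z) (pX z') <= c + 2 * e.
Proof.
move=> pq ap qb hc; apply/ler_addgt0Pr => eta eta0.
have /(bigvee_lt pq)[s /andP[ps sq] hs] : bigvee dY p q (pY z) (pY z') < c + eta.
  by rewrite (le_lt_trans hc) // ltrDl.
have sub : bigvee dX a b (pX z) (pX z') <= bigvee dX (s - e) (s + e) (pX z) (pX z').
  by apply: (bigvee_le_subinterval (fun t => dX_ge0 t _ _)); move: e_ge0; lra.
by apply: (le_trans sub); apply: (le_trans (tripodXY s z z')); lra.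
Qed.

End TripodTransfer.

Section TripodComparison.
Variables (R : realType) (X Y : finType).
Variables (dX : R -> X -> X -> R) (dY : R -> Y -> Y -> R).
Hypotheses (dX_ge0 : forall t x y, 0 <= dX t x y) (dY_ge0 : forall t x y, 0 <= dY t x y).
Variables (Z : Type) (pX : Z -> X) (pY : Z -> Y) (sX : X -> Z) (sY : Y -> Z) (e : R).
Hypotheses (sXK : cancel sX pX) (sYK : cancel sY pY) (e_ge0 : 0 <= e).
Hypothesis tripodXY : forall t z z',
  bigvee dX (t - e) (t + e) (pX z) (pX z') <= dY t (pY z) (pY z') + 2 * e.
Hypothesis tripodYX : forall t z z',
  bigvee dY (t - e) (t + e) (pY z) (pY z') <= dX t (pX z) (pX z') + 2 * e.
Variable a : R6 R.
Hypotheses (a_adm : admissible a) (b_adm : admissible (shift6 a (2 * e))).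

Local Notation f := (pX \o sY).
Local Notation g := (pY \o sX).
Local Notation KX := (bigvee dX (c1 a) (c2 a)).
Local Notation LX := (bigvee dX (c4 a) (c5 a)).
Local Notation KY := (bigvee dY (c1 a + 2 * e) (c2 a - 2 * e)).
Local Notation LY := (bigvee dY (c4 a - 2 * e) (c5 a + 2 * e)).

Lemma tripod_map_YX y y' : KY y y' <= c3 a - 2 * e -> KX (f y) (f y') <= c3 a.
Proof.
move=> hy; case: b_adm => /= b12 _ _ _ _.
rewrite -[c3 a](subrK (2 * e)) /=.
by apply: (tripod_bigvee_le dX_ge0 e_ge0 tripodXY b12); rewrite ?sYK //; move: e_ge0; lra.
Qed.

Lemma tripod_map_XY x x' : LX x x' <= c6 a -> LY (g x) (g x') <= c6 a + 2 * e.
Proof.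
case: a_adm => _ a45 _ _ _ hx /=.
by apply: (tripod_bigvee_le dY_ge0 e_ge0 tripodYX a45); rewrite ?sXK //; move: e_ge0; lra.
Qed.

(* The mixed pairs [(g (f y), y')] are controlled because the tripod inequality
   holds for arbitrary pairs [z, z'], here taken from the two sections. *)
Lemma tripod_contiguous y y' : KY y y' <= c3 a - 2 * e ->
  [/\ LY (g (f y)) (g (f y')) <= c6 a + 2 * e, LY (g (f y)) y' <= c6 a + 2 * e,
      LY y (g (f y')) <= c6 a + 2 * e & LY y y' <= c6 a + 2 * e].
Proof.
move=> hy; have hf := tripod_map_YX hy.
case: a_adm => a12 _ _ [a41 a25] a36; case: b_adm => /= b12 _ _ _ _.
have cross z z' : KX (pX z) (pX z') <= c3 a -> LY (pY z) (pY z') <= c6 a + 2 * e.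
  move=> hz; have := tripod_bigvee_le (z := z) (z' := z') dY_ge0 e_ge0 tripodYX a12.
  by move=> /(_ (c4 a - 2 * e) (c5 a + 2 * e) (c3 a)) h; apply: le_trans (h _ _ hz) _;
    move: e_ge0; lra.
split.
- apply: tripod_map_XY; apply: le_trans (le_trans _ hf) _; last lra.
  by apply: (bigvee_le_subinterval (fun t => dX_ge0 t (f y) (f y'))); lra.
- by have := cross (sX (f y)) (sY y'); rewrite /= !sXK !sYK; apply.
- by have := cross (sY y) (sX (f y')); rewrite /= !sXK !sYK; apply.
- apply: le_trans (le_trans _ hy) _; last by move: e_ge0; lra.
  by apply: (bigvee_le_subinterval (fun t => dY_ge0 t y y')); move: e_ge0; lra.
Qed.

Lemma hom_rank_tripod_le (F : fieldType) k :
  let b := shift6 a (2 * e) in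
  (hom_rank F k (rips (bigvee dY (c1 b) (c2 b)) (c3 b))
                (rips (bigvee dY (c4 b) (c5 b)) (c6 b))
   <= hom_rank F k (rips (bigvee dX (c1 a) (c2 a)) (c3 a))
                   (rips (bigvee dX (c4 a) (c5 a)) (c6 a)))%N.
Proof.
apply: (@hom_rank_le_factor _ _ _ _ _ _ _ _ f g).
- by move=> S KS _; apply: rips_imset KS _; apply: tripod_map_YX.
- by move=> S LS _; apply: rips_imset LS _; apply: tripod_map_XY.
- by move=> S KS _; apply: rips_imsetU KS _; apply: tripod_contiguous.
- exact: rips_down_closed.
Qed.

End TripodComparison.

Section RankInvariant.
Variable R : realType.

Lemma le6_shift (a : R6 R) e : 0 <= e -> le6 a (shift6 a e).
Proof. by move=> e0; split; rewrite /= ?lerDl ?gerBl //; split; rewrite /= lerDl. Qed.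

Lemma le6_trans (a b c : R6 R) : le6 a b -> le6 b c -> le6 a c.
Proof.
case: a b c => [? ? ? ? ? ?] [? ? ? ? ? ?] [? ? ? ? ? ?].
by rewrite /le6 /= => [[? ? ? ? [? ?]] [? ? ? ? [? ?]]]; split; try split; lra.
Qed.

Lemma admissible_between (a b c : R6 R) :
  le6 a b -> le6 b c -> admissible a -> admissible c -> admissible b.
Proof.
case=> l1 l2 l3 l4 [l5 l6] [m1 m2 m3 m4 [m5 m6]].
case=> a12 a45 [a3 a6] [a41 a25] a36 [c12 c45 [c3 c6] [c41 c25] c36].
by split; try split; lra.
Qed.

Lemma rk_shift_le (F : fieldType) k (X Y : finType) (dX : R -> X -> X -> R)
    (dY : R -> Y -> Y -> R) (e : R) (a : R6 R) :
  0 <= e ->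
  (admissible a -> admissible (shift6 a e) ->
    (hom_rank F k (rips (bigvee dY (c1 (shift6 a e)) (c2 (shift6 a e))) (c3 (shift6 a e)))
                  (rips (bigvee dY (c4 (shift6 a e)) (c5 (shift6 a e))) (c6 (shift6 a e)))
     <= hom_rank F k (rips (bigvee dX (c1 a) (c2 a)) (c3 a))
                     (rips (bigvee dX (c4 a) (c5 a)) (c6 a)))%N) ->
  (rk F k dY (shift6 a e) <= rk F k dX a)%E.
Proof.
move=> e0 hr; have lab := le6_shift a e0; rewrite /rk.
have [adA|nadA] := asboolP (admissible a).
  have [adB|nadB] := asboolP (admissible (shift6 a e)).
    by rewrite lee_fin ler_nat hr.
  have [tb|_] := asboolP (trivially_nonadmissible (shift6 a e)).
    by case: tb; exists a; split => // eab; apply: nadB; rewrite -eab.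
  by rewrite lee_fin ler0n.
have [_|ta] := asboolP (trivially_nonadmissible a); first by rewrite leey.
have [c [lca nca adc]] := contrapT ta.
have nadB : ~ admissible (shift6 a e).
  by move=> adB; apply: nadA; apply: admissible_between lca lab adc adB.
rewrite (asboolF nadB) asboolF // => tb; apply: tb; exists c; split => //.
- exact: le6_trans lca lab.
- by move=> ceq; apply: nadB; rewrite -ceq.
Qed.

End RankInvariant.

Lemma d_I_rk_le_tripod (R : realType) (F : fieldType) k (X Y : finType)
    (dX : R -> X -> X -> R) (dY : R -> Y -> Y -> R) (Z : Type)
    (pX : Z -> X) (pY : Z -> Y) (e : R) :
  (forall t x y, 0 <= dX t x y) -> (forall t x y, 0 <= dY t x y) -> 0 <= e ->
  (forall x, exists z, pX z = x) -> (forall y, exists z, pY z = y) ->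
  is_eps_tripod dX dY pX pY e ->
  (d_I (rk F k dX) (rk F k dY) <= (2 * e)%:E)%E.
Proof.
move=> dX_ge0 dY_ge0 e_ge0 /choice[sX sXK] /choice[sY sYK] tri.
have tXY t z z' := (tri t z z').1; have tYX t z z' := (tri t z z').2.
have e2_ge0 : 0 <= 2 * e by rewrite mulr_ge0.
apply: ereal_inf_lbound; exists (2 * e) => //; split => // a.
split; apply: rk_shift_le => // adA adB.
- exact: (hom_rank_tripod_le dX_ge0 dY_ge0 sXK sYK e_ge0 tXY tYX adA adB).
- exact: (hom_rank_tripod_le dY_ge0 dX_ge0 sYK sXK e_ge0 tYX tXY adA adB).
Qed.

Theorem theorem4p4 (R : realType) (F : fieldType) (X Y : finType)
  (dX : R -> X -> X -> R) (dY : R -> Y -> Y -> R) (k : nat) :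
  is_DMS dX -> is_DMS dY ->
  (d_I (rk F k dX) (rk F k dY) <= 2%:E * d_dyn dX dY)%E.
Proof.
move=> [_ dX_pm _ _] [_ dY_pm _ _].
have dX_ge0 t x y : 0 <= dX t x y by case: (dX_pm t).
have dY_ge0 t x y : 0 <= dY t x y by case: (dY_pm t).
rewrite /d_dyn -ereal_inf_pZl // image_comp.
apply/ereal_infP => _ [e [e_ge0 [Z [pX [pY [sX sY tri]]]]] <-] /=.
by rewrite -EFinM; apply: d_I_rk_le_tripod tri.
Qed.
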